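(* Let $p\leq q$, let $0\leq a_1\leq\dots\leq a_p$, and let $L(s)=L_a(s)$ be an H-curve in $\mathrm{Gr}_{p,q}$ with invariants $a_1,\dots,a_p$. Let $s_1<s_2<s_3$ be such that the points $L(s_1),L(s_2),L(s_3)$ are pairwise sufficiently near on this curve. Then for all $j=1,\dots,p$, $$\Psi_j[L(s_1),L(s_2)]+\Psi_j[L(s_2),L(s_3)]=\Psi_j[L(s_1),L(s_3)].$$
   Context: $\mathrm{Gr}_{p,q}$ is the set of $p$-dimensional linear subspaces of $\mathbb{R}^{p+q}$ with the standard scalar product. Jordan angles: for $L,M\in\mathrm{Gr}_{p,q}$ with orthonormal bases $e_i$ of $L$, $f_j$ of $M$, let $\lambda_1\geq\dots\geq\lambda_p$ be the singular values of $(\langle e_i,f_j\rangle)$ and $\Psi_j[L,M]=\arccos\lambda_j$. H-curve: given $0\leq a_1\leq\dots\leq a_p$ and an orthonormal basis $e_1,\dots,e_p,f_1,\dots,f_p,r_1,\dots,r_{q-p}$ of $\mathbb{R}^{p+q}$, $L_a(s)$ is the span of $v_j(s)=\cos(a_js)e_j+\sin(a_js)f_j$, $j=1,\dots,p$; the $a_j$ are the invariants of the curve. Points $L_a(s),L_a(t)$ are sufficiently near if $a_p|s-t|\leq\pi/2$. *)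

From HB Require Import structures.
From mathcomp Require Import all_boot all_order all_algebra.
From mathcomp Require Import all_classical all_reals all_analysis.
Set Implicit Arguments. Unset Strict Implicit. Unset Printing Implicit Defensive.
Import Order.TTheory GRing.Theory Num.Theory.
Local Open Scope ring_scope.
Local Open Scope classical_set_scope.

Section Defs.
Variable R : realType.

Definition sprod {n : nat} (u v : 'rV[R]_n) : R := (u *m v^T) 0 0.

Definition is_onb {p n : nat} (E A : 'M[R]_(p, n)) : Prop :=
  E *m E^T = 1%:M /\ (E == A)%MS.

Definition is_singvals {p : nat} (M : 'M[R]_p) (s : 'rV[R]_p) : Prop :=
  (forall i, 0 <= s 0 i) /\
  (forall i j : 'I_p, (i <= j)%N -> s 0 j <= s 0 i) /\
  exists U V : 'M[R]_p, [/\ U *m U^T = 1%:M, V *m V^T = 1%:M &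
                         M = U *m diag_mx s *m V].

(* singular values lambda_1 >= ... >= lambda_p of the matrix (<e_i, f_j>)
   for orthonormal bases e of the row space of A and f of that of B *)
Definition jordan_cos {p n : nat} (A B : 'M[R]_(p, n)) : 'rV[R]_p :=
  xget 0 [set s | exists E F : 'M[R]_(p, n),
                   is_onb E A /\ is_onb F B /\ is_singvals (E *m F^T) s].

(* Jordan angle Psi_j[L, M] = arccos lambda_j  (j : 'I_p, 0-based) *)
Definition Psi {p n : nat} (j : 'I_p) (A B : 'M[R]_(p, n)) : R :=
  acos (jordan_cos A B 0 j).

Definition orthonormal_frame {p q : nat} (e f : 'I_p -> 'rV[R]_(p + q))
  (r : 'I_(q - p) -> 'rV[R]_(p + q)) : Prop :=
  [/\ (forall i j, sprod (e i) (e j) = (i == j)%:R),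
      (forall i j, sprod (f i) (f j) = (i == j)%:R),
      (forall k l, sprod (r k) (r l) = (k == l)%:R),
      (forall i j, sprod (e i) (f j) = 0) &
      ((forall i k, sprod (e i) (r k) = 0) /\
       (forall i k, sprod (f i) (r k) = 0))].

Definition Hcurve {p q : nat} (a : 'I_p -> R) (e f : 'I_p -> 'rV[R]_(p + q))
  (s : R) : 'M[R]_(p, p + q) :=
  \matrix_(j < p) (cos (a j * s) *: e j + sin (a j * s) *: f j).

(* a_p = the largest invariant (max over j; equals a_p when 0 <= a_1 <= ... <= a_p) *)
Definition amax {p : nat} (a : 'I_p -> R) : R := \big[Num.max/0]_(j < p) a j.

Definition sufficiently_near {p : nat} (a : 'I_p -> R) (s t : R) : Prop :=
  amax a * `|s - t| <= pi / 2.

End Defs.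

From HB Require Import structures.
From mathcomp Require Import all_boot all_order all_algebra.
From mathcomp Require Import all_classical all_reals all_analysis.
Set Implicit Arguments. Unset Strict Implicit. Unset Printing Implicit Defensive.
Import Order.TTheory GRing.Theory Num.Theory.
Local Open Scope ring_scope.

(* The Gram matrix of two points of an H-curve is diagonal, with entries
   cos (a_j (t - s)).  Nearness keeps every a_j (t - s) in [0, pi/2], so these
   entries are already nonnegative and, as a_j is nondecreasing, nonincreasing:
   they are the singular values, whence Psi_j[L(s), L(t)] = a_j (t - s).  The only real work is
   that singular values are well defined: two orthonormal bases of a subspace
   differ by an orthogonal matrix, and the squared singular values of M are the
   eigenvalues of M M^T. *)

Lemma char_poly_orthogonal_conj (R : comNzRingType) n (U X : 'M[R]_n) :
  U *m U^T = 1%:M -> char_poly (U *m X *m U^T) = char_poly X.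
Proof.
move=> UU.
have conjXU : char_poly_mx (U *m X *m U^T) =
    map_mx polyC U *m char_poly_mx X *m map_mx polyC U^T.
  rewrite /char_poly_mx mulmxBr mulmxBl -!map_mxM mul_mx_scalar -scalemxAl.
  by rewrite -map_mxM UU map_scalar_mx scale_scalar_mx mulr1.
rewrite /char_poly conjXU !det_mulmx mulrC mulrA -det_mulmx -map_mxM.
by rewrite mulmx1C // map_scalar_mx det_scalar expr1n mul1r.
Qed.

Lemma char_poly_diag_mx (R : comNzRingType) n (d : 'rV[R]_n) :
  char_poly (diag_mx d) = \prod_(i < n) ('X - (d 0 i)%:P).
Proof.
rewrite char_poly_trig ?diag_mx_is_trig //.
by apply: eq_bigr => i _; rewrite mxE eqxx mulr1n.
Qed.

Lemma mulmx_tr_svd (R : comNzRingType) n (M U V : 'M[R]_n) (s : 'rV[R]_n) :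
  V *m V^T = 1%:M -> M = U *m diag_mx s *m V ->
  M *m M^T = U *m diag_mx (\row_i (s 0 i ^+ 2)) *m U^T.
Proof.
move=> VV ->; rewrite !trmx_mul tr_diag_mx !mulmxA -(mulmxA _ V) VV mulmx1.
by rewrite -(mulmxA U) mulmx_diag; congr (_ *m diag_mx _ *m _); apply/rowP => i; rewrite !mxE.
Qed.

Section SingularValues.
Variable R : realType.

Lemma sorted_ge_row n (s : 'rV[R]_n) :
  (forall i j : 'I_n, (i <= j)%N -> s 0 j <= s 0 i) ->
  sorted >=%O [seq s 0 i | i <- enum 'I_n].
Proof.
move=> s_noninc; rewrite sorted_map.
apply: (@sub_sorted _ (relpre val leq)); first by move=> i j /s_noninc.
by rewrite -sorted_map val_enum_ord iota_sorted.
Qed.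

Lemma is_singvals_uniq n (M : 'M[R]_n) (s t : 'rV[R]_n) :
  is_singvals M s -> is_singvals M t -> s = t.
Proof.
move=> [s_ge0 [s_noninc [U [V [UU VV Ms]]]]] [t_ge0 [t_noninc [U' [V' [UU' VV' Mt]]]]].
pose sq (u : 'rV[R]_n) := \row_i (u 0 i ^+ 2).
have sorted_sq (u : 'rV[R]_n) : (forall i, 0 <= u 0 i) ->
    (forall i j : 'I_n, (i <= j)%N -> u 0 j <= u 0 i) ->
    sorted >=%O [seq sq u 0 i | i <- enum 'I_n].
  move=> u_ge0 u_noninc; apply: sorted_ge_row => i j ij.
  by rewrite !mxE lerXn2r ?nnegrE ?u_noninc.
have char_sq : char_poly (diag_mx (sq s)) = char_poly (diag_mx (sq t)).
  rewrite -(char_poly_orthogonal_conj (diag_mx (sq s)) UU).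
  rewrite -(char_poly_orthogonal_conj (diag_mx (sq t)) UU').
  by rewrite -(mulmx_tr_svd VV Ms) -(mulmx_tr_svd VV' Mt).
rewrite !char_poly_diag_mx in char_sq.
rewrite -!(big_map (fun i => sq _ 0 i) xpredT (fun x => 'X - x%:P)) in char_sq.
rewrite [index_enum _]unlock -enumT in char_sq.
have eq_sq := sorted_eq ge_trans ge_anti (sorted_sq s s_ge0 s_noninc)
  (sorted_sq t t_ge0 t_noninc) (prod_XsubC_eq char_sq).
apply/rowP => i; apply/eqP; rewrite -(@eqrXn2 _ 2) ?s_ge0 ?t_ge0 //.
have /eq_in_map/(_ i) := eq_sq; rewrite mem_enum !mxE => -> //.
Qed.

Lemma is_singvals_diag_mx n (d : 'rV[R]_n) :
  (forall i, 0 <= d 0 i) -> (forall i j : 'I_n, (i <= j)%N -> d 0 j <= d 0 i) ->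
  is_singvals (diag_mx d) d.
Proof.
move=> d_ge0 d_noninc; split=> //; split=> //.
by exists 1%:M, 1%:M; rewrite trmx1 !mulmx1 mul1mx.
Qed.

Lemma is_singvals_orthogonal_mul n (M P Q : 'M[R]_n) (s : 'rV[R]_n) :
  P *m P^T = 1%:M -> Q *m Q^T = 1%:M ->
  is_singvals M s -> is_singvals (P *m M *m Q^T) s.
Proof.
move=> PP QQ [s_ge0 [s_noninc [U [V [UU VV ->]]]]].
split=> //; split=> //; exists (P *m U), (V *m Q^T); split.
- by rewrite trmx_mul mulmxA -(mulmxA P) UU mulmx1 PP.
- by rewrite trmx_mul trmxK mulmxA -(mulmxA V) (mulmx1C QQ) mulmx1 VV.
- by rewrite !mulmxA.
Qed.

Lemma is_onb_orthogonal_change p n (E E' A : 'M[R]_(p, n)) :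
  is_onb E A -> is_onb E' A -> exists2 Q : 'M[R]_p, Q *m Q^T = 1%:M & E = Q *m E'.
Proof.
move=> [EE /andP[EA _]] [E'E' /andP[_ AE']].
have /submxP[Q EQ] := submx_trans EA AE'.
exists Q => //.
by move: EE; rewrite EQ trmx_mul !mulmxA -(mulmxA _ E') E'E' mulmx1.
Qed.

Lemma is_onb_self p n (A : 'M[R]_(p, n)) : A *m A^T = 1%:M -> is_onb A A.
Proof. by move=> AA; split; rewrite // !submx_refl. Qed.

Lemma jordan_cos_orthonormal p n (A B : 'M[R]_(p, n)) (d : 'rV[R]_p) :
  A *m A^T = 1%:M -> B *m B^T = 1%:M -> is_singvals (A *m B^T) d ->
  jordan_cos A B = d.
Proof.
move=> AA BB sv_d; apply: xget_unique.
  by exists A, B; split; [exact: is_onb_self | split; [exact: is_onb_self |]].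
move=> c [E [F [onbE [onbF sv_c]]]].
have [P PP EP] := is_onb_orthogonal_change onbE (is_onb_self AA).
have [Q QQ FQ] := is_onb_orthogonal_change onbF (is_onb_self BB).
apply: is_singvals_uniq sv_c _.
by rewrite EP FQ trmx_mul !mulmxA -(mulmxA P); exact: is_singvals_orthogonal_mul.
Qed.

End SingularValues.

Section ScalarProduct.
Variables (R : realType) (n : nat).
Implicit Types u v w : 'rV[R]_n.

Lemma sprodC u v : sprod u v = sprod v u.
Proof. by rewrite /sprod -[u *m v^T]trmxK trmx_mul trmxK mxE. Qed.

Lemma sprodDl u v w : sprod (u + v) w = sprod u w + sprod v w.
Proof. by rewrite /sprod mulmxDl mxE. Qed.

Lemma sprodDr u v w : sprod w (u + v) = sprod w u + sprod w v.
Proof. by rewrite !(sprodC w) sprodDl. Qed.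

Lemma sprodZl c u w : sprod (c *: u) w = c * sprod u w.
Proof. by rewrite /sprod -scalemxAl mxE. Qed.

Lemma sprodZr c u w : sprod w (c *: u) = c * sprod w u.
Proof. by rewrite !(sprodC w) sprodZl. Qed.

End ScalarProduct.

Section HCurve.
Variables (R : realType) (p q : nat) (a : 'I_p -> R) (e f : 'I_p -> 'rV[R]_(p + q)).
Hypotheses (ee : forall i j, sprod (e i) (e j) = (i == j)%:R)
           (ff : forall i j, sprod (f i) (f j) = (i == j)%:R)
           (ef : forall i j, sprod (e i) (f j) = 0).

Lemma Hcurve_gram s t :
  Hcurve a e f s *m (Hcurve a e f t)^T = diag_mx (\row_i cos (a i * (s - t))).
Proof.
apply/matrixP => i j.
have -> : (Hcurve a e f s *m (Hcurve a e f t)^T) i j =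
    sprod (cos (a i * s) *: e i + sin (a i * s) *: f i)
          (cos (a j * t) *: e j + sin (a j * t) *: f j).
  by rewrite /sprod !mxE; apply: eq_bigr => k _; rewrite !mxE.
rewrite !sprodDl !sprodDr !sprodZl !sprodZr ee ff ef (sprodC (f i)) ef !mxE.
case: eqP => [<-|_]; last by rewrite !mulr0 !addr0.
by rewrite mulrBr cosB mulr1n !mulr0 !mulr1 addr0 add0r.
Qed.

Lemma Hcurve_orthonormal s : Hcurve a e f s *m (Hcurve a e f s)^T = 1%:M.
Proof.
rewrite Hcurve_gram -diag_const_mx; congr diag_mx.
by apply/rowP => i; rewrite !mxE subrr mulr0 cos0.
Qed.

Hypotheses (a_ge0 : forall j, 0 <= a j)
           (a_nondecr : forall i j : 'I_p, (i <= j)%N -> a i <= a j).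

Lemma Psi_Hcurve s t j : s < t -> sufficiently_near a s t ->
  Psi j (Hcurve a e f s) (Hcurve a e f t) = a j * (t - s).
Proof.
move=> lt_st near_st; have le_st : 0 <= t - s by rewrite subr_ge0 ltW.
have arg_ge0 i : 0 <= a i * (t - s) by rewrite mulr_ge0.
have arg_le_pihalf i : a i * (t - s) <= pi / 2.
  apply: le_trans near_st; rewrite distrC ger0_norm // ler_wpM2r //.
  exact: le_bigmax.
have arg_in_pi i : a i * (t - s) \in `[0, pi].
  rewrite in_itv /= arg_ge0 (le_trans (arg_le_pihalf i)) //.
  by rewrite ler_pdivrMr // ler_peMr ?pi_ge0 // ler1n.
have sv_gram : is_singvals (Hcurve a e f s *m (Hcurve a e f t)^T)
                           (\row_i cos (a i * (t - s))).
  rewrite Hcurve_gram (_ : \row_i _ = \row_i cos (a i * (t - s))); last first.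
    by apply/rowP => i; rewrite !mxE -cosN -mulrN opprB.
  apply: is_singvals_diag_mx => [i | i k ik]; rewrite !mxE.
    apply: cos_ge0_pihalf; rewrite arg_le_pihalf andbT (le_trans _ (arg_ge0 i)) //.
    by rewrite oppr_le0 divr_ge0 ?pi_ge0.
  by rewrite leNgt ltr_cos ?arg_in_pi // -leNgt ler_wpM2r ?a_nondecr.
rewrite /Psi (jordan_cos_orthonormal _ _ sv_gram) ?Hcurve_orthonormal //.
by rewrite mxE cosK.
Qed.

End HCurve.

Theorem lemma12 (R : realType) (p q : nat) (Hpq : (p <= q)%N)
  (a : 'I_p -> R)
  (Ha0 : forall j, 0 <= a j)
  (Hamono : forall i j : 'I_p, (i <= j)%N -> a i <= a j)
  (e f : 'I_p -> 'rV[R]_(p + q)) (r : 'I_(q - p) -> 'rV[R]_(p + q))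
  (Hframe : orthonormal_frame e f r)
  (s1 s2 s3 : R) (H12 : s1 < s2) (H23 : s2 < s3)
  (N12 : sufficiently_near a s1 s2)
  (N23 : sufficiently_near a s2 s3)
  (N13 : sufficiently_near a s1 s3) :
  forall j : 'I_p,
    Psi j (Hcurve a e f s1) (Hcurve a e f s2)
    + Psi j (Hcurve a e f s2) (Hcurve a e f s3)
    = Psi j (Hcurve a e f s1) (Hcurve a e f s3).
Proof.
move=> j; case: Hframe => ee ff _ ef _.
have H13 := lt_trans H12 H23.
rewrite !(Psi_Hcurve ee ff ef Ha0 Hamono) //.
by rewrite -mulrDr addrC addrA subrK.
Qed.
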